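(* Let $F(x)$ be a formula in prenex form with no free variables other than $x$, and let $\mathbf c$ be a nonempty finite set of object constants containing every object constant occurring in $F(x)$. (a) If the sentence $\forall xF(x)$ is safe, then $\forall xF(x)\leftrightarrow\bigwedge_{c\in\mathbf c}F(c)$ is derivable from $\mathit{SPP}_{\mathbf c}$ in $\mathbf{INT}^=+\mathrm{DE}$. (b) If the sentence $\exists xF(x)$ is safe, then $\exists xF(x)\leftrightarrow\bigvee_{c\in\mathbf c}F(c)$ is derivable from $\mathit{SPP}_{\mathbf c}$ in $\mathbf{INT}^=+\mathrm{DE}$.
   Context: Formulas are first-order formulas with object constants, predicate constants and equality, but no function constants of arity $>0$; primitive connectives $\bot,\land,\lor,\rightarrow$, quantifiers $\forall,\exists$; $\neg G$ is $G\rightarrow\bot$, $\top$ is $\bot\rightarrow\bot$, $G\leftrightarrow H$ is $(G\rightarrow H)\land(H\rightarrow G)$. Restricted variables: for quantifier-free $G$, $\mathrm{RV}(G)$ is: $\emptyset$ if $G$ is an equality between two variables; the set of variables of $G$ if $G$ is any other atomic formula; $\mathrm{RV}(\bot)=\emptyset$; $\mathrm{RV}(G\land H)=\mathrm{RV}(G)\cup\mathrm{RV}(H)$; $\mathrm{RV}(G\lor H)=\mathrm{RV}(G)\cap\mathrm{RV}(H)$; $\mathrm{RV}(G\rightarrow H)=\emptyset$. An occurrence of a subformula or variable is positive if the number of implications containing it in their antecedent is even, negative otherwise, and strictly positive if it is in the antecedent of no implication. A prenex sentence $Q_1x_1\cdots Q_nx_nM$ ($M$ quantifier-free, $x_i$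 distinct) is semi-safe if every strictly positive occurrence of every $x_i$ in $M$ belongs to a subformula $G\rightarrow H$ with $x_i\in\mathrm{RV}(G)$. Simplification transformations: $\neg\bot\mapsto\top$, $\neg\top\mapsto\bot$; $\bot\land G\mapsto\bot$, $G\land\bot\mapsto\bot$, $\top\land G\mapsto G$, $G\land\top\mapsto G$; $\bot\lor G\mapsto G$, $G\lor\bot\mapsto G$, $\top\lor G\mapsto\top$, $G\lor\top\mapsto\top$; $\bot\rightarrow G\mapsto\top$, $G\rightarrow\top\mapsto\top$, $\top\rightarrow G\mapsto G$. A variable $x$ is positively (resp. negatively) weakly restricted in a quantifier-free formula $G$ if the formula obtained from $G$ by first replacing every atomic formula $A$ of $G$ with $x\in\mathrm{RV}(A)$ by $\bot$ and then applying the simplification transformations is $\top$ (resp. $\bot$). A semi-safe prenex sentence $Q_1x_1\cdots Q_nx_nM$ is safe if for every occurrence of every variable $x_i$: (a) if $Q_i=\forall$, the occurrence belongs to a positive subformula (of the sentence) in which $x_i$ is positively weakly restricted, or to a negative subformula in which $x_i$ is negatively weakly restricted; (b) if $Q_i=\exists$, the occurrence belongs to a negative subformula in which $x_i$ is positively weakly restricted, or to a positive subformula in which $x_i$ is negatively weakly restricted. For a finite set $\mathbf c$ of object constants, $\mathit{in}_{\mathbf c}(x_1,\dots,x_m)$ is $\bigwedge_{1\le j\le m}\bigvee_{c\in\mathbf c}x_j=c$, and $\mathit{SPP}_{\mathbf c}$ is the conjunction of $\forall\mathbf x(p_i(\mathbf x)\rightarrow\mathit{in}_{\mathbf c}(\mathbf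 x))$ over all predicate constants $p_i$ occurring in $F(x)$. $\mathbf{INT}^=$ is intuitionistic predicate logic with equality; $\mathrm{DE}$ is the decidable equality axiom $x=y\lor x\neq y$. *)

From Stdlib Require Import List Arith Bool.
Import ListNotations.

Inductive term : Type := Var (v : nat) | Cst (c : nat).

(* a predicate constant is identified by its name p together with its arity
   (the length of the argument list) *)
Inductive form : Type :=
| Bot
| Atom (p : nat) (ts : list term)
| Eq (s t : term)
| And (A B : form)
| Or (A B : form)
| Imp (A B : form)
| All (x : nat) (A : form)
| Ex (x : nat) (A : form).

Definition Neg (A : form) : form := Imp A Bot.
Definition Top : form := Imp Bot Bot.
Definition Iff (A B : form) : form := And (Imp A B) (Imp B A).

Definition tvar (y : nat) (t : term) : bool :=
  match t with Var z => Nat.eqb z y | Cst _ => false end.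
Definition tcst (c : nat) (t : term) : bool :=
  match t with Cst d => Nat.eqb d c | Var _ => false end.
Definition is_var (t : term) : bool :=
  match t with Var _ => true | Cst _ => false end.

Fixpoint free (y : nat) (A : form) : bool :=
  match A with
  | Bot => false
  | Atom _ ts => existsb (tvar y) ts
  | Eq s t => tvar y s || tvar y t
  | And B C | Or B C | Imp B C => free y B || free y C
  | All x B | Ex x B => negb (Nat.eqb x y) && free y B
  end.

Fixpoint occ_cst (c : nat) (A : form) : bool :=
  match A with
  | Bot => false
  | Atom _ ts => existsb (tcst c) ts
  | Eq s t => tcst c s || tcst c t
  | And B C | Or B C | Imp B C => occ_cst c B || occ_cst c C
  | All _ B | Ex _ B => occ_cst c B
  end.

Fixpoint preds (A : form) : list (nat * nat) :=
  match A with
  | Bot | Eq _ _ => []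
  | Atom p ts => [(p, length ts)]
  | And B C | Or B C | Imp B C => preds B ++ preds C
  | All _ B | Ex _ B => preds B
  end.

Definition subst_t (x : nat) (t s : term) : term :=
  match s with Var z => if Nat.eqb z x then t else s | Cst _ => s end.

Fixpoint subst (x : nat) (t : term) (A : form) : form :=
  match A with
  | Bot => Bot
  | Atom p ts => Atom p (map (subst_t x t) ts)
  | Eq s u => Eq (subst_t x t s) (subst_t x t u)
  | And B C => And (subst x t B) (subst x t C)
  | Or B C => Or (subst x t B) (subst x t C)
  | Imp B C => Imp (subst x t B) (subst x t C)
  | All y B => if Nat.eqb y x then A else All y (subst x t B)
  | Ex y B => if Nat.eqb y x then A else Ex y (subst x t B)
  end.

Fixpoint free_for (t : term) (x : nat) (A : form) : bool :=
  match A with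
  | And B C | Or B C | Imp B C => free_for t x B && free_for t x C
  | All y B | Ex y B => negb (free x A) || (negb (tvar y t) && free_for t x B)
  | _ => true
  end.

Inductive Prov : list form -> form -> Prop :=
| P_ax G A : In A G -> Prov G A
| P_botE G A : Prov G Bot -> Prov G A
| P_andI G A B : Prov G A -> Prov G B -> Prov G (And A B)
| P_andE1 G A B : Prov G (And A B) -> Prov G A
| P_andE2 G A B : Prov G (And A B) -> Prov G B
| P_orI1 G A B : Prov G A -> Prov G (Or A B)
| P_orI2 G A B : Prov G B -> Prov G (Or A B)
| P_orE G A B C : Prov G (Or A B) -> Prov (A :: G) C -> Prov (B :: G) C -> Prov G C
| P_impI G A B : Prov (A :: G) B -> Prov G (Imp A B)
| P_impE G A B : Prov G (Imp A B) -> Prov G A -> Prov G B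
| P_allI G x y A :
    free_for (Var y) x A = true ->
    (forall C, In C G -> free y C = false) ->
    free y (All x A) = false ->
    Prov G (subst x (Var y) A) -> Prov G (All x A)
| P_allE G x t A : free_for t x A = true -> Prov G (All x A) -> Prov G (subst x t A)
| P_exI G x t A : free_for t x A = true -> Prov G (subst x t A) -> Prov G (Ex x A)
| P_exE G x y A B :
    free_for (Var y) x A = true ->
    (forall C, In C G -> free y C = false) ->
    free y (Ex x A) = false -> free y B = false ->
    Prov G (Ex x A) -> Prov (subst x (Var y) A :: G) B -> Prov G B
| P_eqR G t : Prov G (Eq t t)
| P_eqE G x s t A :
    free_for s x A = true -> free_for t x A = true ->
    Prov G (Eq s t) -> Prov G (subst x s A) -> Prov G (subst x t A)
| P_DE G s t : Prov G (Or (Eq s t) (Neg (Eq s t))).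

Inductive quant : Type := QAll | QEx.

Fixpoint qf (A : form) : bool :=
  match A with
  | All _ _ | Ex _ _ => false
  | And B C | Or B C | Imp B C => qf B && qf C
  | _ => true
  end.

Fixpoint strip (A : form) : list (quant * nat) * form :=
  match A with
  | All x B => ((QAll, x) :: fst (strip B), snd (strip B))
  | Ex x B => ((QEx, x) :: fst (strip B), snd (strip B))
  | _ => ([], A)
  end.
Definition prefix (A : form) := fst (strip A).
Definition matrix (A : form) := snd (strip A).

Definition prenex (A : form) : Prop := qf (matrix A) = true.
Definition sentence (A : form) : Prop := forall y, free y A = false.

(* y \in RV(G), for quantifier-free G *)
Fixpoint rv (y : nat) (G : form) : bool :=
  match G with
  | Bot => false
  | Atom _ ts => existsb (tvar y) ts
  | Eq s t => if is_var s && is_var t then false else tvar y s || tvar y t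
  | And A B => rv y A || rv y B
  | Or A B => rv y A && rv y B
  | Imp _ _ => false
  | All _ _ | Ex _ _ => false
  end.

(* every strictly positive occurrence of y in M belongs to a subformula
   G -> H with y \in RV(G) *)
Fixpoint ss (y : nat) (M : form) : bool :=
  match M with
  | Atom _ _ | Eq _ _ => negb (free y M)
  | And A B | Or A B => ss y A && ss y B
  | Imp A B => rv y A || ss y B
  | _ => true
  end.

Definition semi_safe (A : form) : Prop :=
  qf (matrix A) = true /\ sentence A /\ NoDup (map snd (prefix A)) /\
  (forall q y, In (q, y) (prefix A) -> ss y (matrix A) = true).

Definition is_bot (f : form) : bool := match f with Bot => true | _ => false end.
Definition is_top (f : form) : bool := match f with Imp Bot Bot => true | _ => false end.

Definition simp_and (A B : form) : form :=
  if is_bot A || is_bot B then Bot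
  else if is_top A then B else if is_top B then A else And A B.
Definition simp_or (A B : form) : form :=
  if is_bot A then B else if is_bot B then A
  else if is_top A || is_top B then Top else Or A B.
Definition simp_imp (A B : form) : form :=
  if is_bot A then Top else if is_top B then Top
  else if is_top A then B else Imp A B.

Fixpoint simp (G : form) : form :=
  match G with
  | And A B => simp_and (simp A) (simp B)
  | Or A B => simp_or (simp A) (simp B)
  | Imp A B => simp_imp (simp A) (simp B)
  | _ => G
  end.

Fixpoint kill (y : nat) (G : form) : form :=
  match G with
  | Atom _ _ | Eq _ _ => if rv y G then Bot else G
  | And A B => And (kill y A) (kill y B)
  | Or A B => Or (kill y A) (kill y B)
  | Imp A B => Imp (kill y A) (kill y B)
  | _ => G
  end.

Definition pwr (y : nat) (G : form) : bool := is_top (simp (kill y G)).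
Definition nwr (y : nat) (G : form) : bool := is_bot (simp (kill y G)).

Definition good (q : quant) (y : nat) (pos : bool) (S : form) : bool :=
  match q with
  | QAll => (pos && pwr y S) || (negb pos && nwr y S)
  | QEx => (negb pos && pwr y S) || (pos && nwr y S)
  end.

(* every occurrence of y in S belongs to a subformula of S satisfying good *)
Fixpoint sv (q : quant) (y : nat) (pos : bool) (S : form) : bool :=
  good q y pos S ||
  match S with
  | And A B | Or A B => sv q y pos A && sv q y pos B
  | Imp A B => sv q y (negb pos) A && sv q y pos B
  | Atom _ _ | Eq _ _ => negb (free y S)
  | _ => true
  end.

Definition safe (A : form) : Prop :=
  semi_safe A /\
  (forall q y, In (q, y) (prefix A) -> sv q y true (matrix A) = true).

Fixpoint bigAnd (l : list form) : form :=
  match l with [] => Top | [A] => A | A :: l' => And A (bigAnd l') end.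
Fixpoint bigOr (l : list form) : form :=
  match l with [] => Bot | [A] => A | A :: l' => Or A (bigOr l') end.

Definition in_c (cs : list nat) (vs : list nat) : form :=
  bigAnd (map (fun v => bigOr (map (fun c => Eq (Var v) (Cst c)) cs)) vs).

Definition allN (vs : list nat) (A : form) : form := fold_right All A vs.

Definition SPP (cs : list nat) (F : form) : form :=
  bigAnd (map (fun pn => let vs := seq 0 (snd pn) in
                 allN vs (Imp (Atom (fst pn) (map Var vs)) (in_c cs vs)))
              (preds F)).

From Stdlib Require Import List Arith Bool Lia.
Import ListNotations.

(* By DE, either x equals one of the constants in c, and then F(x) is the
   corresponding conjunct/disjunct, or x lies outside c.  In the second case
   SPP_c refutes every atom in which x is restricted, so once those atoms are
   replaced by Bot, the subformulas that safety singles out simplify to Top or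
   Bot.  Propagating this through the matrix according to polarity, and then
   through the prefix by monotonicity of the quantifiers, yields F(c0) -> F(x)
   when x is universal and F(x) -> F(c0) when x is existential, for any c0 in c. *)

(* Adding hypotheses can break the eigenvariable conditions of [Prov], so
   weakening is not available there; [Der] has it by construction. *)
Definition Der (H : list form) (A : form) : Prop := forall G, incl H G -> Prov G A.

Lemma Der_Prov H A : Der H A -> Prov H A.
Proof. intros HA. apply HA, incl_refl. Qed.

Lemma Der_ax H A : In A H -> Der H A.
Proof. intros HA G HG. apply P_ax, HG, HA. Qed.

Lemma Der_weaken H H' A : incl H H' -> Der H A -> Der H' A.
Proof. intros HH' HA G HG. apply HA. eapply incl_tran; eassumption. Qed.

Lemma Der_hd H A : Der (A :: H) A.
Proof. apply Der_ax, in_eq. Qed.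

Lemma Der_tl H A B : Der H A -> Der (B :: H) A.
Proof. apply Der_weaken, incl_tl, incl_refl. Qed.

Lemma incl_cons_cons (A : form) H G : incl H G -> incl (A :: H) (A :: G).
Proof. intros HG. apply incl_cons; [apply in_eq | apply incl_tl, HG]. Qed.

Lemma Der_botE H A : Der H Bot -> Der H A.
Proof. intros H0 G HG. apply P_botE, H0, HG. Qed.

Lemma Der_andI H A B : Der H A -> Der H B -> Der H (And A B).
Proof. intros HA HB G HG. apply P_andI; auto. Qed.

Lemma Der_andE1 H A B : Der H (And A B) -> Der H A.
Proof. intros HAB G HG. eapply P_andE1; auto. Qed.

Lemma Der_andE2 H A B : Der H (And A B) -> Der H B.
Proof. intros HAB G HG. eapply P_andE2; auto. Qed.

Lemma Der_orI1 H A B : Der H A -> Der H (Or A B).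
Proof. intros HA G HG. apply P_orI1; auto. Qed.

Lemma Der_orI2 H A B : Der H B -> Der H (Or A B).
Proof. intros HB G HG. apply P_orI2; auto. Qed.

Lemma Der_orE H A B C : Der H (Or A B) -> Der (A :: H) C -> Der (B :: H) C -> Der H C.
Proof.
  intros HAB HA HB G HG.
  eapply P_orE; [apply HAB, HG | apply HA | apply HB]; apply incl_cons_cons, HG.
Qed.

Lemma Der_impI H A B : Der (A :: H) B -> Der H (Imp A B).
Proof. intros HB G HG. apply P_impI, HB, incl_cons_cons, HG. Qed.

Lemma Der_impE H A B : Der H (Imp A B) -> Der H A -> Der H B.
Proof. intros HAB HA G HG. eapply P_impE; auto. Qed.

Lemma Der_allE H x t A : free_for t x A = true -> Der H (All x A) -> Der H (subst x t A).
Proof. intros Ht HA G HG. apply P_allE; auto. Qed.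

Lemma Der_exI H x t A : free_for t x A = true -> Der H (subst x t A) -> Der H (Ex x A).
Proof. intros Ht HA G HG. eapply P_exI; eauto. Qed.

Lemma Der_eqE H x s t A : free_for s x A = true -> free_for t x A = true ->
  Der H (Eq s t) -> Der H (subst x s A) -> Der H (subst x t A).
Proof. intros Hs Ht Hst HA G HG. apply P_eqE with (s := s); auto. Qed.

Lemma Der_eqR H t : Der H (Eq t t).
Proof. intros G _. apply P_eqR. Qed.

Lemma Der_DE H s t : Der H (Or (Eq s t) (Neg (Eq s t))).
Proof. intros G _. apply P_DE. Qed.

Lemma Der_imp_refl H A : Der H (Imp A A).
Proof. apply Der_impI, Der_hd. Qed.

Lemma Der_imp_trans H A B C : Der H (Imp A B) -> Der H (Imp B C) -> Der H (Imp A C).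
Proof.
  intros HAB HBC. apply Der_impI, Der_impE with B; [apply Der_tl, HBC |].
  apply Der_impE with A; [apply Der_tl, HAB | apply Der_hd].
Qed.

Lemma Der_Top H : Der H Top.
Proof. apply Der_imp_refl. Qed.

Lemma Der_eq_sym H s t : Der H (Eq s t) -> Der H (Eq t s).
Proof.
  intros Hst.
  (* Leibniz rule on [Eq z s], for a variable z not occurring in s *)
  set (z := match s with Var v => S v | Cst _ => 0 end).
  assert (Hz : forall u, subst_t z u s = s).
  { intros u. unfold z. destruct s as [v|]; simpl; [|reflexivity].
    rewrite (proj2 (Nat.eqb_neq v (S v))) by lia. reflexivity. }
  assert (E : forall u, subst z u (Eq (Var z) s) = Eq u s).
  { intros u. simpl. rewrite Nat.eqb_refl, Hz. reflexivity. }
  rewrite <- (E t). apply Der_eqE with (s := s); [reflexivity | reflexivity | exact Hst |].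
  rewrite E. apply Der_eqR.
Qed.

Definition Equiv (H : list form) (A B : form) : Prop := Der H (Imp A B) /\ Der H (Imp B A).

Lemma Equiv_refl H A : Equiv H A A.
Proof. split; apply Der_imp_refl. Qed.

Lemma Equiv_trans H A B C : Equiv H A B -> Equiv H B C -> Equiv H A C.
Proof. intros [HAB HBA] [HBC HCB]. split; eapply Der_imp_trans; eassumption. Qed.

Lemma Der_imp_and H A A' B B' :
  Der H (Imp A A') -> Der H (Imp B B') -> Der H (Imp (And A B) (And A' B')).
Proof.
  intros HA HB. apply Der_impI, Der_andI.
  - apply Der_impE with A; [apply Der_tl, HA | eapply Der_andE1, Der_hd].
  - apply Der_impE with B; [apply Der_tl, HB | eapply Der_andE2, Der_hd].
Qed.

Lemma Der_imp_or H A A' B B' :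
  Der H (Imp A A') -> Der H (Imp B B') -> Der H (Imp (Or A B) (Or A' B')).
Proof.
  intros HA HB. apply Der_impI. apply Der_orE with A B; [apply Der_hd | |].
  - apply Der_orI1, Der_impE with A; [do 2 apply Der_tl; exact HA | apply Der_hd].
  - apply Der_orI2, Der_impE with B; [do 2 apply Der_tl; exact HB | apply Der_hd].
Qed.

Lemma Der_imp_imp H A A' B B' :
  Der H (Imp A' A) -> Der H (Imp B B') -> Der H (Imp (Imp A B) (Imp A' B')).
Proof.
  intros HA HB. do 2 apply Der_impI. apply Der_impE with B; [do 2 apply Der_tl; exact HB |].
  apply Der_impE with A; [apply Der_tl, Der_hd |].
  apply Der_impE with A'; [do 2 apply Der_tl; exact HA | apply Der_hd].
Qed.

Lemma Equiv_And H A A' B B' : Equiv H A A' -> Equiv H B B' -> Equiv H (And A B) (And A' B').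
Proof. intros [] []. split; apply Der_imp_and; assumption. Qed.

Lemma Equiv_Or H A A' B B' : Equiv H A A' -> Equiv H B B' -> Equiv H (Or A B) (Or A' B').
Proof. intros [] []. split; apply Der_imp_or; assumption. Qed.

Lemma Equiv_Imp H A A' B B' : Equiv H A A' -> Equiv H B B' -> Equiv H (Imp A B) (Imp A' B').
Proof. intros [] []. split; apply Der_imp_imp; assumption. Qed.

Lemma bigAnd_cons A l : l <> [] -> bigAnd (A :: l) = And A (bigAnd l).
Proof. destruct l; [congruence | reflexivity]. Qed.

Lemma bigOr_cons A l : l <> [] -> bigOr (A :: l) = Or A (bigOr l).
Proof. destruct l; [congruence | reflexivity]. Qed.

Lemma Prov_bigAnd_intro G l : (forall A, In A l -> Prov G A) -> Prov G (bigAnd l).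
Proof.
  induction l as [|A [|B l] IH]; intros Hl.
  - apply P_impI, P_ax, in_eq.
  - apply Hl, in_eq.
  - rewrite bigAnd_cons by discriminate.
    apply P_andI; [apply Hl, in_eq | apply IH; intros; apply Hl, in_cons; assumption].
Qed.

Lemma Der_bigAnd_elim H A l : In A l -> Der H (bigAnd l) -> Der H A.
Proof.
  induction l as [|B [|C l] IH]; intros HA Hl; [destruct HA | |].
  - destruct HA as [<- | []]. exact Hl.
  - rewrite bigAnd_cons in Hl by discriminate. destruct HA as [<- | HA].
    + eapply Der_andE1, Hl.
    + apply IH; [exact HA | eapply Der_andE2, Hl].
Qed.

Lemma Der_bigOr_intro H A l : In A l -> Der H A -> Der H (bigOr l).
Proof.
  induction l as [|B [|C l] IH]; intros HA HD; [destruct HA | |].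
  - destruct HA as [<- | []]. exact HD.
  - rewrite bigOr_cons by discriminate. destruct HA as [<- | HA].
    + apply Der_orI1, HD.
    + apply Der_orI2, IH; assumption.
Qed.

Lemma Der_bigOr_elim H l C :
  Der H (bigOr l) -> (forall A, In A l -> Der (A :: H) C) -> Der H C.
Proof.
  revert H. induction l as [|B [|B' l] IH]; intros H Hl HC.
  - apply Der_botE, Hl.
  - apply Der_impE with B; [apply Der_impI, HC, in_eq | exact Hl].
  - rewrite bigOr_cons in Hl by discriminate.
    apply Der_orE with B (bigOr (B' :: l)); [exact Hl | apply HC, in_eq |].
    apply IH; [apply Der_hd |]. intros A HA.
    apply Der_weaken with (A :: H); [| apply HC, in_cons, HA].
    intros D [<- | HD]; [apply in_eq | right; right; exact HD].
Qed.

Lemma Der_dec_Or H A B :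
  Der H (Or A (Neg A)) -> Der H (Or B (Neg B)) -> Der H (Or (Or A B) (Neg (Or A B))).
Proof.
  intros HA HB. apply Der_orE with A (Neg A); [exact HA | apply Der_orI1, Der_orI1, Der_hd |].
  apply Der_orE with B (Neg B); [apply Der_tl, HB | apply Der_orI1, Der_orI2, Der_hd |].
  apply Der_orI2, Der_impI. apply Der_orE with A B; [apply Der_hd | |].
  - apply Der_impE with A; [do 3 apply Der_tl; apply Der_hd | apply Der_hd].
  - apply Der_impE with B; [do 2 apply Der_tl; apply Der_hd | apply Der_hd].
Qed.

Lemma Der_dec_bigOr H l :
  (forall A, In A l -> Der H (Or A (Neg A))) -> Der H (Or (bigOr l) (Neg (bigOr l))).
Proof.
  induction l as [|A [|B l] IH]; intros Hl.
  - apply Der_orI2, Der_imp_refl.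
  - apply Hl, in_eq.
  - rewrite bigOr_cons by discriminate.
    apply Der_dec_Or; [apply Hl, in_eq | apply IH; intros; apply Hl, in_cons; assumption].
Qed.

Lemma subst_t_id z s : subst_t z (Var z) s = s.
Proof. destruct s as [v|]; simpl; [destruct (Nat.eqb_spec v z); subst|]; reflexivity. Qed.

Lemma subst_id z A : subst z (Var z) A = A.
Proof.
  induction A; simpl; rewrite ?subst_t_id; try congruence.
  - f_equal. rewrite <- (map_id ts) at 2. apply map_ext, subst_t_id.
  - destruct (x =? z); congruence.
  - destruct (x =? z); congruence.
Qed.

Lemma free_for_self z A : free_for (Var z) z A = true.
Proof.
  induction A; simpl; rewrite ?IHA1, ?IHA2; auto;
    destruct (Nat.eqb_spec z x); subst; rewrite ?Nat.eqb_refl, ?IHA, ?orb_true_r; auto.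
Qed.

Lemma free_for_cst c x A : free_for (Cst c) x A = true.
Proof. induction A; simpl; rewrite ?IHA1, ?IHA2, ?IHA, ?orb_true_r; auto. Qed.

Lemma free_for_qf t x A : qf A = true -> free_for t x A = true.
Proof.
  induction A; simpl; intros Hq; rewrite ?andb_true_iff in Hq; try discriminate;
    rewrite ?IHA1, ?IHA2; tauto.
Qed.

Lemma qf_subst x t A : qf A = true -> qf (subst x t A) = true.
Proof.
  induction A; simpl; intros Hq; rewrite ?andb_true_iff in *; try discriminate; tauto.
Qed.

Lemma subst_t_nofree x t s : tvar x s = false -> subst_t x t s = s.
Proof. destruct s; simpl; [intros ->|]; reflexivity. Qed.

Lemma subst_nofree x t A : free x A = false -> subst x t A = A.
Proof.
  induction A; simpl; intros Hf; rewrite ?orb_false_iff in Hf; try reflexivity.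
  - f_equal. induction ts as [|s ts IHts]; simpl in *; [reflexivity|].
    apply orb_false_iff in Hf. rewrite subst_t_nofree, IHts; tauto.
  - rewrite !subst_t_nofree; tauto.
  - rewrite IHA1, IHA2; tauto.
  - rewrite IHA1, IHA2; tauto.
  - rewrite IHA1, IHA2; tauto.
  - destruct (Nat.eqb_spec x0 x); [reflexivity|]. rewrite IHA; [reflexivity | exact Hf].
  - destruct (Nat.eqb_spec x0 x); [reflexivity|]. rewrite IHA; [reflexivity | exact Hf].
Qed.

Lemma tvar_subst_cst w x c s :
  tvar w (subst_t x (Cst c) s) = true -> tvar w s = true /\ w <> x.
Proof.
  destruct s as [v|]; simpl; [|discriminate].
  destruct (Nat.eqb_spec v x); simpl; [discriminate|].
  intros Hw. apply Nat.eqb_eq in Hw. subst. rewrite Nat.eqb_refl. auto.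
Qed.

Lemma free_subst_cst w x c A :
  free w (subst x (Cst c) A) = true -> free w A = true /\ w <> x.
Proof.
  induction A; simpl; intros Hf; try discriminate.
  - apply existsb_exists in Hf as [s [Hs Hw]]. apply in_map_iff in Hs as [s0 [<- Hs0]].
    apply tvar_subst_cst in Hw as [Hw Hwx]. split; [apply existsb_exists; eauto | exact Hwx].
  - apply orb_true_iff in Hf as [Hf|Hf]; apply tvar_subst_cst in Hf as [Hf Hwx];
      rewrite Hf, ?orb_true_r; auto.
  - apply orb_true_iff in Hf as [Hf|Hf]; [apply IHA1 in Hf | apply IHA2 in Hf];
      destruct Hf as [Hf Hwx]; rewrite Hf, ?orb_true_r; auto.
  - apply orb_true_iff in Hf as [Hf|Hf]; [apply IHA1 in Hf | apply IHA2 in Hf];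
      destruct Hf as [Hf Hwx]; rewrite Hf, ?orb_true_r; auto.
  - apply orb_true_iff in Hf as [Hf|Hf]; [apply IHA1 in Hf | apply IHA2 in Hf];
      destruct Hf as [Hf Hwx]; rewrite Hf, ?orb_true_r; auto.
  - destruct (Nat.eqb_spec x0 x); simpl in Hf; apply andb_true_iff in Hf as [Hx0 Hf].
    + subst. split; [rewrite Hx0; exact Hf|]. intros ->. rewrite Nat.eqb_refl in Hx0. discriminate.
    + apply IHA in Hf as [Hf Hwx]. rewrite Hx0, Hf. auto.
  - destruct (Nat.eqb_spec x0 x); simpl in Hf; apply andb_true_iff in Hf as [Hx0 Hf].
    + subst. split; [rewrite Hx0; exact Hf|]. intros ->. rewrite Nat.eqb_refl in Hx0. discriminate.
    + apply IHA in Hf as [Hf Hwx]. rewrite Hx0, Hf. auto.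
Qed.

Lemma free_not_prefix w A : free w A = true -> ~ In w (map snd (prefix A)).
Proof.
  induction A; intros Hf; try (intros []; fail); cbn [free] in Hf;
    apply andb_true_iff in Hf as [Hx Hf]; intros [<- | Hw];
    [rewrite Nat.eqb_refl in Hx; discriminate | exact (IHA Hf Hw)
    |rewrite Nat.eqb_refl in Hx; discriminate | exact (IHA Hf Hw)].
Qed.

Lemma subst_allN x t vs A : ~ In x vs -> subst x t (allN vs A) = allN vs (subst x t A).
Proof.
  induction vs as [|v vs IH]; simpl; intros Hx; [reflexivity|].
  destruct (Nat.eqb_spec v x); [exfalso; auto|]. rewrite IH; auto.
Qed.

Lemma free_for_allN t x vs A : qf A = true -> (forall v, In v vs -> t <> Var v) ->
  free_for t x (allN vs A) = true.
Proof.
  induction vs as [|v vs IH]; simpl; intros Hq Ht; [apply free_for_qf, Hq|].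
  rewrite IH by auto. destruct t as [u|]; simpl; [|apply orb_true_r].
  destruct (Nat.eqb_spec u v); [subst; exfalso; eapply Ht; eauto | apply orb_true_r].
Qed.

Lemma free_allN y vs A : free y (allN vs A) = true -> ~ In y vs /\ free y A = true.
Proof.
  induction vs as [|v vs IH]; simpl; intros Hf; [auto|].
  apply andb_true_iff in Hf as [Hv Hf]. apply IH in Hf as [Hy Hf]. split; [|exact Hf].
  intros [-> | Hy']; [rewrite Nat.eqb_refl in Hv; discriminate | auto].
Qed.

Lemma free_bigAnd y l : free y (bigAnd l) = true -> exists A, In A l /\ free y A = true.
Proof.
  induction l as [|B [|C l] IH]; intros Hf; [discriminate | exists B; simpl; auto |].
  rewrite bigAnd_cons in Hf by discriminate. apply orb_true_iff in Hf as [Hf|Hf].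
  - exists B; simpl; auto.
  - destruct (IH Hf) as [A [HA Hf']]. exists A; simpl in *; auto.
Qed.

Lemma free_bigOr y l : free y (bigOr l) = true -> exists A, In A l /\ free y A = true.
Proof.
  induction l as [|B [|C l] IH]; intros Hf; [discriminate | exists B; simpl; auto |].
  rewrite bigOr_cons in Hf by discriminate. apply orb_true_iff in Hf as [Hf|Hf].
  - exists B; simpl; auto.
  - destruct (IH Hf) as [A [HA Hf']]. exists A; simpl in *; auto.
Qed.

Lemma qf_bigAnd l : (forall A, In A l -> qf A = true) -> qf (bigAnd l) = true.
Proof.
  induction l as [|B [|C l] IH]; intros Hl; [reflexivity | apply Hl, in_eq |].
  rewrite bigAnd_cons by discriminate. cbn [qf]. rewrite Hl by apply in_eq.
  apply IH. intros; apply Hl, in_cons; assumption.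
Qed.

Lemma qf_bigOr l : (forall A, In A l -> qf A = true) -> qf (bigOr l) = true.
Proof.
  induction l as [|B [|C l] IH]; intros Hl; [reflexivity | apply Hl, in_eq |].
  rewrite bigOr_cons by discriminate. cbn [qf]. rewrite Hl by apply in_eq.
  apply IH. intros; apply Hl, in_cons; assumption.
Qed.

Definition msub_t (s : nat -> term) (t : term) : term :=
  match t with Var v => s v | Cst c => Cst c end.

(* leaves quantified subformulas untouched; only used on quantifier-free ones *)
Fixpoint msub (s : nat -> term) (A : form) : form :=
  match A with
  | Atom p ts => Atom p (map (msub_t s) ts)
  | Eq a b => Eq (msub_t s a) (msub_t s b)
  | And B C => And (msub s B) (msub s C)
  | Or B C => Or (msub s B) (msub s C)
  | Imp B C => Imp (msub s B) (msub s C)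
  | _ => A
  end.

Lemma msub_ext s1 s2 A : (forall v, s1 v = s2 v) -> msub s1 A = msub s2 A.
Proof.
  intros Hs.
  assert (Ht : forall t, msub_t s1 t = msub_t s2 t) by (destruct t; simpl; auto).
  induction A; simpl; rewrite ?Ht; try congruence.
  f_equal. apply map_ext, Ht.
Qed.

Lemma msub_id s A : (forall v, s v = Var v) -> msub s A = A.
Proof.
  intros Hs. assert (Ht : forall t, msub_t s t = t) by (destruct t; simpl; auto).
  induction A; simpl; rewrite ?Ht; try congruence.
  f_equal. rewrite <- (map_id ts) at 2. apply map_ext, Ht.
Qed.

Lemma subst_msub x t A : qf A = true ->
  subst x t A = msub (fun v => if v =? x then t else Var v) A.
Proof.
  induction A; simpl; intros Hq; rewrite ?andb_true_iff in Hq; try discriminate;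
    try reflexivity; try (rewrite IHA1, IHA2 by tauto; reflexivity).
  - f_equal. apply map_ext. destruct a; reflexivity.
  - destruct s, t0; reflexivity.
Qed.

Lemma msub_msub s1 s2 A : qf A = true ->
  msub s1 (msub s2 A) = msub (fun v => msub_t s1 (s2 v)) A.
Proof.
  induction A; simpl; intros Hq; rewrite ?andb_true_iff in Hq; try discriminate;
    try reflexivity; try (rewrite IHA1, IHA2 by tauto; reflexivity).
  - f_equal. rewrite map_map. apply map_ext. destruct a; reflexivity.
  - destruct s, t; reflexivity.
Qed.

Fixpoint seq_sub (N : nat) (ts : list term) (v : nat) : term :=
  match ts with
  | [] => Var v
  | t :: ts' => if v =? N then t else seq_sub (S N) ts' v
  end.

Lemma seq_sub_notin N ts v : ~ In v (seq N (length ts)) -> seq_sub N ts v = Var v.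
Proof.
  revert N. induction ts as [|t ts IH]; intros N Hv; simpl; [reflexivity|].
  destruct (Nat.eqb_spec v N); [exfalso; apply Hv; left; auto|].
  apply IH. intros Hin. apply Hv. right. exact Hin.
Qed.

Lemma map_seq_sub N ts : map (seq_sub N ts) (seq N (length ts)) = ts.
Proof.
  revert N. induction ts as [|t ts IH]; intros N; simpl; [reflexivity|].
  rewrite Nat.eqb_refl. f_equal. rewrite <- (IH (S N)) at 2. apply map_ext_in.
  intros v Hv. apply in_seq in Hv. simpl. rewrite (proj2 (Nat.eqb_neq v N)) by lia.
  reflexivity.
Qed.

Lemma Der_allN_seq_inst H N ts A : qf A = true ->
  (forall v, In (Var v) ts -> ~ In v (seq N (length ts))) ->
  Der H (allN (seq N (length ts)) A) -> Der H (msub (seq_sub N ts) A).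
Proof.
  revert N A. induction ts as [|t ts IH]; intros N A Hq Hts HA.
  - rewrite msub_id by reflexivity. exact HA.
  - assert (HtN : forall v, t = Var v -> ~ In v (seq N (S (length ts)))).
    { intros v ->. apply Hts, in_eq. }
    assert (HN : ~ In N (seq (S N) (length ts))) by (rewrite in_seq; lia).
    simpl in HA. apply Der_allE with (t := t) in HA.
    2:{ apply free_for_allN; [exact Hq|]. intros v Hv ->.
        apply (HtN v eq_refl). right. exact Hv. }
    rewrite subst_allN in HA by exact HN.
    apply IH in HA; [| apply qf_subst, Hq |].
    + rewrite subst_msub, msub_msub in HA by (assumption || apply qf_subst, Hq).
      erewrite msub_ext; [exact HA|]. intros v. simpl.
      destruct (Nat.eqb_spec v N); [|reflexivity].
      destruct t as [u|]; simpl; [|reflexivity].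
      symmetry. apply seq_sub_notin. intros Hu. apply (HtN u eq_refl). right. exact Hu.
    + intros v Hv Hin. apply (Hts v); [right; exact Hv | right; exact Hin].
Qed.

Definition in_c_terms (cs : list nat) (ts : list term) : form :=
  bigAnd (map (fun t => bigOr (map (fun c => Eq t (Cst c)) cs)) ts).

Lemma in_c_terms_Var cs vs : in_c_terms cs (map Var vs) = in_c cs vs.
Proof. unfold in_c_terms. rewrite map_map. reflexivity. Qed.

Lemma msub_bigAnd s l : msub s (bigAnd l) = bigAnd (map (msub s) l).
Proof.
  induction l as [|A [|B l] IH]; [reflexivity | reflexivity |].
  rewrite bigAnd_cons by discriminate. cbn [map msub]. rewrite IH. reflexivity.
Qed.

Lemma msub_bigOr s l : msub s (bigOr l) = bigOr (map (msub s) l).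
Proof.
  induction l as [|A [|B l] IH]; [reflexivity | reflexivity |].
  rewrite bigOr_cons by discriminate. cbn [map msub]. rewrite IH. reflexivity.
Qed.

Lemma msub_in_c_terms s cs ts : msub s (in_c_terms cs ts) = in_c_terms cs (map (msub_t s) ts).
Proof.
  unfold in_c_terms. rewrite msub_bigAnd, !map_map. f_equal. apply map_ext. intros t.
  rewrite msub_bigOr, map_map. reflexivity.
Qed.

Lemma qf_in_c_terms cs ts : qf (in_c_terms cs ts) = true.
Proof.
  apply qf_bigAnd. intros A HA. apply in_map_iff in HA as [t [<- _]].
  apply qf_bigOr. intros B HB. apply in_map_iff in HB as [c [<- _]]. reflexivity.
Qed.

Lemma free_in_c_terms y cs ts : free y (in_c_terms cs ts) = true -> In (Var y) ts.
Proof.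
  intros Hf. apply free_bigAnd in Hf as [A [HA Hf]]. apply in_map_iff in HA as [t [<- Ht]].
  apply free_bigOr in Hf as [B [HB Hf]]. apply in_map_iff in HB as [c [<- _]].
  destruct t as [v|]; simpl in Hf; [|discriminate].
  rewrite orb_false_r in Hf. apply Nat.eqb_eq in Hf. subst. exact Ht.
Qed.

Definition spp_clause (cs : list nat) (p : nat) (vs : list nat) : form :=
  allN vs (Imp (Atom p (map Var vs)) (in_c cs vs)).

(* SPP_c with the bound variables of the clause for an n-ary predicate renamed
   from 0, ..., n-1 to N, ..., N+n-1, so that the clause can be instantiated
   by terms whose variables are all below N without capture *)
Definition SPP_shift (cs : list nat) (F : form) (N : nat) : form :=
  bigAnd (map (fun pn => spp_clause cs (fst pn) (seq N (snd pn))) (preds F)).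

Lemma SPP_shift_0 cs F : SPP cs F = SPP_shift cs F 0.
Proof. reflexivity. Qed.

Lemma spp_clause_closed y cs p vs : free y (spp_clause cs p vs) = false.
Proof.
  apply not_true_iff_false. intros Hf. apply free_allN in Hf as [Hy Hf]. apply Hy.
  simpl in Hf. apply orb_true_iff in Hf as [Hf|Hf].
  - apply existsb_exists in Hf as [t [Ht Hyt]]. apply in_map_iff in Ht as [v [<- Hv]].
    simpl in Hyt. apply Nat.eqb_eq in Hyt. subst. exact Hv.
  - rewrite <- in_c_terms_Var in Hf. apply free_in_c_terms, in_map_iff in Hf as [v [[= ->] Hv]].
    exact Hv.
Qed.

Lemma SPP_shift_closed cs F N : sentence (SPP_shift cs F N).
Proof.
  intros y. apply not_true_iff_false. intros Hf.
  apply free_bigAnd in Hf as [A [HA Hf]]. apply in_map_iff in HA as [pn [<- _]].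
  rewrite spp_clause_closed in Hf. discriminate.
Qed.

Lemma Der_spp_clause_inst H cs p N ts :
  (forall v, In (Var v) ts -> ~ In v (seq N (length ts))) ->
  Der H (spp_clause cs p (seq N (length ts))) -> Der H (Imp (Atom p ts) (in_c_terms cs ts)).
Proof.
  intros Hts HA. apply Der_allN_seq_inst in HA;
    [| simpl; rewrite <- in_c_terms_Var; apply qf_in_c_terms | exact Hts].
  rewrite <- in_c_terms_Var in HA. cbn [msub] in HA.
  rewrite msub_in_c_terms, !map_map in HA. cbn [msub_t] in HA.
  rewrite map_seq_sub in HA. exact HA.
Qed.

Lemma Der_SPP_shift_clause H cs F N p n :
  In (p, n) (preds F) -> Der H (SPP_shift cs F N) -> Der H (spp_clause cs p (seq N n)).
Proof.
  intros Hp HS. eapply Der_bigAnd_elim; [| exact HS].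
  apply in_map_iff. exists (p, n). auto.
Qed.

Lemma Der_refute_atom H cs F N x p ts :
  Der H (SPP_shift cs F N) -> Der H (Neg (in_c cs [x])) ->
  In (p, length ts) (preds F) -> (forall v, In (Var v) ts -> v < N) -> In (Var x) ts ->
  Der H (Neg (Atom p ts)).
Proof.
  intros HS Hx Hp Hts Hxts.
  assert (Hinst : Der H (Imp (Atom p ts) (in_c_terms cs ts))).
  { apply Der_spp_clause_inst with N; [| eapply Der_SPP_shift_clause; eassumption].
    intros v Hv Hin. apply Hts in Hv. apply in_seq in Hin. lia. }
  apply Der_impI, Der_impE with (in_c cs [x]); [apply Der_tl, Hx |].
  eapply Der_bigAnd_elim; [| apply Der_impE with (Atom p ts); [apply Der_tl, Hinst | apply Der_hd]].
  apply in_map_iff. exists (Var x). auto.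
Qed.

Lemma is_bot_eq A : is_bot A = true -> A = Bot.
Proof. destruct A; simpl; congruence. Qed.

Lemma is_top_eq A : is_top A = true -> A = Top.
Proof. destruct A as [| | | | | [] [] | |]; simpl; congruence || reflexivity. Qed.

Lemma Equiv_Bot H A : Der H (Neg A) -> Equiv H A Bot.
Proof. intros HA. split; [exact HA | apply Der_impI, Der_botE, Der_hd]. Qed.

Lemma Equiv_Top H A : Der H A -> Equiv H A Top.
Proof. intros HA. split; apply Der_impI; [apply Der_Top | apply Der_tl, HA]. Qed.

Lemma simp_and_equiv H A B : Equiv H (And A B) (simp_and A B).
Proof.
  unfold simp_and. destruct (is_bot A) eqn:EA; [|destruct (is_bot B) eqn:EB]; simpl.
  - apply is_bot_eq in EA as ->. apply Equiv_Bot, Der_impI. eapply Der_andE1, Der_hd.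
  - apply is_bot_eq in EB as ->. apply Equiv_Bot, Der_impI. eapply Der_andE2, Der_hd.
  - destruct (is_top A) eqn:TA; [|destruct (is_top B) eqn:TB; [|apply Equiv_refl]].
    + apply is_top_eq in TA as ->. split; apply Der_impI.
      * eapply Der_andE2, Der_hd.
      * apply Der_andI; [apply Der_Top | apply Der_hd].
    + apply is_top_eq in TB as ->. split; apply Der_impI.
      * eapply Der_andE1, Der_hd.
      * apply Der_andI; [apply Der_hd | apply Der_Top].
Qed.

Lemma simp_or_equiv H A B : Equiv H (Or A B) (simp_or A B).
Proof.
  unfold simp_or. destruct (is_bot A) eqn:EA; [|destruct (is_bot B) eqn:EB].
  - apply is_bot_eq in EA as ->. split; apply Der_impI.
    + apply Der_orE with Bot B; [apply Der_hd | apply Der_botE, Der_hd | apply Der_hd].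
    + apply Der_orI2, Der_hd.
  - apply is_bot_eq in EB as ->. split; apply Der_impI.
    + apply Der_orE with A Bot; [apply Der_hd | apply Der_hd | apply Der_botE, Der_hd].
    + apply Der_orI1, Der_hd.
  - destruct (is_top A) eqn:TA; [|destruct (is_top B) eqn:TB; [|apply Equiv_refl]]; simpl.
    + apply is_top_eq in TA as ->. apply Equiv_Top, Der_orI1, Der_Top.
    + apply is_top_eq in TB as ->. apply Equiv_Top, Der_orI2, Der_Top.
Qed.

Lemma simp_imp_equiv H A B : Equiv H (Imp A B) (simp_imp A B).
Proof.
  unfold simp_imp. destruct (is_bot A) eqn:EA; [|destruct (is_top B) eqn:TB].
  - apply is_bot_eq in EA as ->. apply Equiv_Top, Der_impI, Der_botE, Der_hd.
  - apply is_top_eq in TB as ->. apply Equiv_Top, Der_impI, Der_Top.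
  - destruct (is_top A) eqn:TA; [|apply Equiv_refl].
    apply is_top_eq in TA as ->. split; apply Der_impI.
    + apply Der_impE with Top; [apply Der_hd | apply Der_Top].
    + apply Der_impI, Der_tl, Der_hd.
Qed.

Lemma simp_equiv H A : Equiv H A (simp A).
Proof.
  induction A; simpl; try apply Equiv_refl.
  - eapply Equiv_trans; [apply Equiv_And; eassumption | apply simp_and_equiv].
  - eapply Equiv_trans; [apply Equiv_Or; eassumption | apply simp_or_equiv].
  - eapply Equiv_trans; [apply Equiv_Imp; eassumption | apply simp_imp_equiv].
Qed.

(** * Transfer between a constant instance and a variable outside c *)

Inductive subformula : form -> form -> Prop :=
| sub_refl F : subformula F F
| sub_And_l A B F : subformula (And A B) F -> subformula A F
| sub_And_r A B F : subformula (And A B) F -> subformula B F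
| sub_Or_l A B F : subformula (Or A B) F -> subformula A F
| sub_Or_r A B F : subformula (Or A B) F -> subformula B F
| sub_Imp_l A B F : subformula (Imp A B) F -> subformula A F
| sub_Imp_r A B F : subformula (Imp A B) F -> subformula B F
| sub_All x A F : subformula (All x A) F -> subformula A F
| sub_Ex x A F : subformula (Ex x A) F -> subformula A F.

Lemma subformula_preds S F : subformula S F -> incl (preds S) (preds F).
Proof.
  induction 1; simpl in *; try (apply incl_refl || assumption);
    eapply incl_tran; try eassumption; auto using incl_appl, incl_appr, incl_refl.
Qed.

Lemma subformula_occ_cst c S F :
  subformula S F -> occ_cst c S = true -> occ_cst c F = true.
Proof.
  induction 1; simpl in *; intros Hc; auto; apply IHsubformula; rewrite Hc; auto with bool.
Qed.

Definition term_index (t : term) : nat := match t with Var v => v | Cst _ => 0 end.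

Fixpoint var_bound (A : form) : nat :=
  match A with
  | Bot => 0
  | Atom _ ts => max (length ts) (list_max (map term_index ts))
  | Eq s t => max (term_index s) (term_index t)
  | And B C | Or B C | Imp B C => max (var_bound B) (var_bound C)
  | All x B | Ex x B => max x (var_bound B)
  end.

Lemma subformula_var_bound S F : subformula S F -> var_bound S <= var_bound F.
Proof. induction 1; simpl in *; lia. Qed.

Lemma var_bound_Atom p ts v : In (Var v) ts -> v <= var_bound (Atom p ts).
Proof.
  intros Hv. simpl. enough (v <= list_max (map term_index ts)) by lia.
  assert (Hmax := proj1 (list_max_le (map term_index ts) _) (le_n _)).
  rewrite Forall_forall in Hmax. apply Hmax, in_map_iff. exists (Var v). auto.
Qed.

Lemma preds_arity_le p n F : In (p, n) (preds F) -> n <= var_bound F.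
Proof.
  induction F; simpl; intros Hp; try rewrite in_app_iff in Hp; try tauto;
    try (destruct Hp as [Hp|Hp]; [apply IHF1 in Hp | apply IHF2 in Hp]; lia);
    try (apply IHF in Hp; lia).
  destruct Hp as [[= <- <-] | []]. lia.
Qed.

Lemma free_All_self z A : free z (All z A) = false.
Proof. simpl. rewrite Nat.eqb_refl. reflexivity. Qed.

Lemma free_Ex_self z A : free z (Ex z A) = false.
Proof. simpl. rewrite Nat.eqb_refl. reflexivity. Qed.

Lemma Prov_imp_All G z A A' : (forall C, In C G -> free z C = false) ->
  Prov (All z A :: G) (Imp A A') -> Prov G (Imp (All z A) (All z A')).
Proof.
  intros HG HA. apply P_impI, P_allI with z;
    [apply free_for_self | | apply free_All_self |].
  - intros C [<- | HC]; [apply free_All_self | auto].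
  - rewrite subst_id. apply P_impE with A; [exact HA |].
    pose proof (P_allE _ z (Var z) A (free_for_self z A)
                  (P_ax (All z A :: G) _ (in_eq _ _))) as HAz.
    rewrite subst_id in HAz. exact HAz.
Qed.

Lemma Prov_imp_Ex G z A A' : (forall C, In C G -> free z C = false) ->
  Prov (A :: Ex z A :: G) (Imp A A') -> Prov G (Imp (Ex z A) (Ex z A')).
Proof.
  intros HG HA. apply P_impI, P_exE with z z A;
    [apply free_for_self | | apply free_Ex_self | apply free_Ex_self | apply P_ax, in_eq |].
  - intros C [<- | HC]; [apply free_Ex_self | auto].
  - rewrite subst_id. apply P_exI with (Var z); [apply free_for_self |].
    rewrite subst_id. apply P_impE with A; [exact HA | apply P_ax, in_eq].
Qed.

(* In an occurrence of polarity [pos] of the variable bound by [q], a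
   subformula can be transported from the instance S[c/x] to S when
   [transfer_dir q pos] is true, and from S to S[c/x] otherwise. *)
Definition transfer_dir (q : quant) (pos : bool) : bool :=
  match q with QAll => pos | QEx => negb pos end.

Definition imp_dir (b : bool) (A B : form) : form := if b then Imp A B else Imp B A.

Lemma transfer_dir_negb q pos : transfer_dir q (negb pos) = negb (transfer_dir q pos).
Proof. destruct q; reflexivity. Qed.

Lemma Der_imp_dir_refl H b A : Der H (imp_dir b A A).
Proof. destruct b; apply Der_imp_refl. Qed.

(* invariant of the induction on the prefix: each quantified variable of B can
   serve as its own eigenvariable in the context G *)
Definition avoids_prefix (G : list form) (B : form) : Prop :=
  forall C z, In C G -> free z C = true -> ~ In z (map snd (prefix B)).

Lemma avoids_prefix_cons G B C : avoids_prefix G B ->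
  (forall w, free w C = true -> free w B = true) -> avoids_prefix (C :: G) B.
Proof.
  intros HG HC D w [<- | HD] Hw; [apply free_not_prefix, HC, Hw | exact (HG D w HD Hw)].
Qed.

Lemma avoids_prefix_body G B0 z B : map snd (prefix B0) = z :: map snd (prefix B) ->
  avoids_prefix G B0 -> avoids_prefix G B.
Proof. intros E HG C w HC Hw Hin. apply (HG C w HC Hw). rewrite E. right. exact Hin. Qed.

Lemma avoids_prefix_eigen G B0 z B : map snd (prefix B0) = z :: map snd (prefix B) ->
  avoids_prefix G B0 -> forall C, In C G -> free z C = false.
Proof.
  intros E HG C HC. apply not_true_iff_false. intros Hz.
  apply (HG C z HC Hz). rewrite E. left. reflexivity.
Qed.

Lemma free_All_inv w z A : free w (All z A) = true -> free w A = true.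
Proof. simpl. intros Hw. apply andb_true_iff in Hw. tauto. Qed.

Lemma free_Ex_inv w z A : free w (Ex z A) = true -> free w A = true.
Proof. simpl. intros Hw. apply andb_true_iff in Hw. tauto. Qed.

Section Transfer.

Variables (cs : list nat) (F : form) (N x c : nat).
Hypothesis cs_covers_F : forall d, occ_cst d F = true -> In d cs.
Hypothesis var_bound_F_lt : var_bound F < N.

Section Matrix.

Variable H : list form.
Hypothesis H_SPP : Der H (SPP_shift cs F N).
Hypothesis H_out : Der H (Neg (in_c cs [x])).

Lemma Der_refute_eq_cst d : In d cs -> Der H (Neg (Eq (Var x) (Cst d))).
Proof.
  intros Hd. apply Der_impI, Der_impE with (in_c cs [x]); [apply Der_tl, H_out |].
  eapply Der_bigOr_intro; [apply in_map_iff; exists d; auto | apply Der_hd].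
Qed.

Lemma kill_equiv S : subformula S F -> qf S = true -> Equiv H S (kill x S).
Proof.
  induction S; simpl; intros Hsub Hq; try discriminate; try apply Equiv_refl.
  - destruct (existsb (tvar x) ts) eqn:Hx; [apply Equiv_Bot | apply Equiv_refl].
    apply (Der_refute_atom H cs F N x); [exact H_SPP | exact H_out | | |].
    + apply (subformula_preds _ _ Hsub), in_eq.
    + intros v Hv. apply (var_bound_Atom p) in Hv.
      apply subformula_var_bound in Hsub. lia.
    + apply existsb_exists in Hx as [[v|] [Ht Hxt]]; simpl in Hxt; [|discriminate].
      apply Nat.eqb_eq in Hxt. subst. exact Ht.
  - assert (Hocc : forall d, occ_cst d (Eq s t) = true -> In d cs)
      by (intros d Hd; apply cs_covers_F, (subformula_occ_cst _ _ _ Hsub), Hd).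
    destruct s as [a|a], t as [b|b]; simpl; rewrite ?orb_false_r; try apply Equiv_refl.
    + destruct (Nat.eqb_spec a x); [subst | apply Equiv_refl].
      apply Equiv_Bot, Der_refute_eq_cst, Hocc. simpl. apply Nat.eqb_refl.
    + destruct (Nat.eqb_spec b x); [subst | apply Equiv_refl].
      apply Equiv_Bot, Der_impI, Der_impE with (Eq (Var x) (Cst a)).
      * apply Der_tl, Der_refute_eq_cst, Hocc. simpl. rewrite Nat.eqb_refl. reflexivity.
      * apply Der_eq_sym, Der_hd.
  - apply andb_true_iff in Hq as [Hq1 Hq2].
    apply Equiv_And; [apply IHS1 | apply IHS2]; eauto using subformula.
  - apply andb_true_iff in Hq as [Hq1 Hq2].
    apply Equiv_Or; [apply IHS1 | apply IHS2]; eauto using subformula.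
  - apply andb_true_iff in Hq as [Hq1 Hq2].
    apply Equiv_Imp; [apply IHS1 | apply IHS2]; eauto using subformula.
Qed.

Lemma Der_imp_of_pwr S A : subformula S F -> qf S = true -> pwr x S = true ->
  Der H (Imp A S).
Proof.
  intros Hsub Hq Hp. apply is_top_eq in Hp.
  destruct (kill_equiv S Hsub Hq) as [_ Hkill], (simp_equiv H (kill x S)) as [_ Hsimp].
  rewrite Hp in Hsimp. apply Der_impI, Der_impE with (kill x S); [apply Der_tl, Hkill |].
  apply Der_impE with Top; [apply Der_tl, Hsimp | apply Der_Top].
Qed.

Lemma Der_imp_of_nwr S A : subformula S F -> qf S = true -> nwr x S = true ->
  Der H (Imp S A).
Proof.
  intros Hsub Hq Hn. apply is_bot_eq in Hn.
  destruct (kill_equiv S Hsub Hq) as [Hkill _], (simp_equiv H (kill x S)) as [Hsimp _].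
  rewrite Hn in Hsimp. apply Der_impI, Der_botE, Der_impE with S; [| apply Der_hd].
  apply Der_tl. eapply Der_imp_trans; eassumption.
Qed.

Lemma good_transfer q pos S : subformula S F -> qf S = true -> good q x pos S = true ->
  Der H (imp_dir (transfer_dir q pos) (subst x (Cst c) S) S).
Proof.
  intros Hsub Hq Hg.
  destruct q, pos; simpl in *; rewrite ?orb_false_r in Hg;
    [apply Der_imp_of_pwr | apply Der_imp_of_nwr | apply Der_imp_of_nwr | apply Der_imp_of_pwr];
    assumption.
Qed.

Lemma matrix_transfer q S : subformula S F -> qf S = true ->
  forall pos, sv q x pos S = true ->
  Der H (imp_dir (transfer_dir q pos) (subst x (Cst c) S) S).
Proof.
  induction S; intros Hsub Hq pos Hsv; cbn [sv] in Hsv;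
    destruct (good q x pos _) eqn:Hg; try (apply good_transfer; assumption);
    simpl in Hsv, Hq; try discriminate.
  - apply Der_imp_dir_refl.
  - rewrite subst_nofree by (apply negb_true_iff, Hsv). apply Der_imp_dir_refl.
  - rewrite subst_nofree by (apply negb_true_iff, Hsv). apply Der_imp_dir_refl.
  - apply andb_true_iff in Hq as [Hq1 Hq2], Hsv as [Hsv1 Hsv2].
    specialize (IHS1 (sub_And_l _ _ _ Hsub) Hq1 pos Hsv1).
    specialize (IHS2 (sub_And_r _ _ _ Hsub) Hq2 pos Hsv2).
    simpl. destruct (transfer_dir q pos); apply Der_imp_and; assumption.
  - apply andb_true_iff in Hq as [Hq1 Hq2], Hsv as [Hsv1 Hsv2].
    specialize (IHS1 (sub_Or_l _ _ _ Hsub) Hq1 pos Hsv1).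
    specialize (IHS2 (sub_Or_r _ _ _ Hsub) Hq2 pos Hsv2).
    simpl. destruct (transfer_dir q pos); apply Der_imp_or; assumption.
  - apply andb_true_iff in Hq as [Hq1 Hq2], Hsv as [Hsv1 Hsv2].
    specialize (IHS1 (sub_Imp_l _ _ _ Hsub) Hq1 (negb pos) Hsv1).
    specialize (IHS2 (sub_Imp_r _ _ _ Hsub) Hq2 pos Hsv2).
    rewrite transfer_dir_negb in IHS1.
    simpl. destruct (transfer_dir q pos); apply Der_imp_imp; assumption.
Qed.

End Matrix.

Lemma prenex_transfer q B : subformula B F -> qf (matrix B) = true ->
  ~ In x (map snd (prefix B)) -> sv q x true (matrix B) = true ->
  forall G, avoids_prefix G B -> In (SPP_shift cs F N) G -> In (Neg (in_c cs [x])) G ->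
  Prov G (imp_dir (transfer_dir q true) (subst x (Cst c) B) B).
Proof.
  induction B; intros Hsub Hq Hx Hsv G HG HS Hout;
    try (apply Der_Prov, matrix_transfer;
         [apply Der_ax; assumption .. | assumption | assumption | assumption]).
  - rename x0 into z.
    assert (Hz : z <> x) by (intros ->; apply Hx, in_eq).
    specialize (IHB (sub_All _ _ _ Hsub) Hq (fun Hin => Hx (in_cons _ _ _ Hin)) Hsv).
    assert (HGB : avoids_prefix G B)
      by (apply avoids_prefix_body with (All z B) z; [reflexivity | exact HG]).
    assert (Hfree : forall w, free w (subst x (Cst c) B) = true -> free w B = true)
      by (intros w Hw; apply (free_subst_cst w x c), Hw).
    simpl. rewrite (proj2 (Nat.eqb_neq z x) Hz).
    destruct (transfer_dir q true); simpl in *; apply Prov_imp_All;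
      try (apply avoids_prefix_eigen with (All z B) B; [reflexivity | exact HG]);
      apply IHB; try (right; assumption);
      (apply avoids_prefix_cons; [exact HGB | intros w Hw; apply free_All_inv in Hw; auto]).
  - rename x0 into z.
    assert (Hz : z <> x) by (intros ->; apply Hx, in_eq).
    specialize (IHB (sub_Ex _ _ _ Hsub) Hq (fun Hin => Hx (in_cons _ _ _ Hin)) Hsv).
    assert (HGB : avoids_prefix G B)
      by (apply avoids_prefix_body with (Ex z B) z; [reflexivity | exact HG]).
    assert (Hfree : forall w, free w (subst x (Cst c) B) = true -> free w B = true)
      by (intros w Hw; apply (free_subst_cst w x c), Hw).
    simpl. rewrite (proj2 (Nat.eqb_neq z x) Hz).
    destruct (transfer_dir q true); simpl in *; apply Prov_imp_Ex;
      try (apply avoids_prefix_eigen with (Ex z B) B; [reflexivity | exact HG]);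
      apply IHB; try (right; right; assumption);
      (apply avoids_prefix_cons; [apply avoids_prefix_cons; [exact HGB |] |]);
      intros w Hw; try apply free_Ex_inv in Hw; auto.
Qed.

End Transfer.

Lemma Prov_allN_intro G vs A : (forall C, In C G -> sentence C) ->
  Prov G A -> Prov G (allN vs A).
Proof.
  intros HG HA. induction vs as [|v vs IH]; simpl; [exact HA|].
  apply P_allI with v; [apply free_for_self | intros C HC; apply HG, HC | apply free_All_self |].
  rewrite subst_id. exact IH.
Qed.

Lemma Prov_SPP_shift G cs F N : (forall C, In C G -> sentence C) ->
  In (SPP cs F) G -> var_bound F < N -> Prov G (SPP_shift cs F N).
Proof.
  intros HG HS HN. apply Prov_bigAnd_intro. intros A HA.
  apply in_map_iff in HA as [[p n] [<- Hp]]. simpl. apply Prov_allN_intro; [exact HG|].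
  pose proof (Der_spp_clause_inst G cs p 0 (map Var (seq N n))) as Hinst.
  rewrite length_map, length_seq, in_c_terms_Var in Hinst.
  apply Der_Prov, Hinst.
  - intros v Hv Hin. apply in_map_iff in Hv as [u [[= <-] Hu]].
    apply in_seq in Hu, Hin. apply preds_arity_le in Hp. lia.
  - rewrite SPP_shift_0 in HS. eapply Der_SPP_shift_clause; [exact Hp | apply Der_ax, HS].
Qed.

Lemma Der_eq_unsubst H x t A : free_for t x A = true ->
  Der H (Eq t (Var x)) -> Der H (subst x t A) -> Der H A.
Proof.
  intros Ht Heq HA. pose proof (Der_eqE H x t (Var x) A Ht (free_for_self x A) Heq HA) as HA'.
  rewrite subst_id in HA'. exact HA'.
Qed.

Section Instances.

Variables (F : form) (x : nat) (cs : list nat).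
Hypothesis F_prenex : prenex F.
Hypothesis F_free : forall y, free y F = true -> y = x.
Hypothesis cs_nonempty : cs <> [].
Hypothesis cs_covers_F : forall c, occ_cst c F = true -> In c cs.

Let N := S (var_bound F).
Let instances := map (fun c => subst x (Cst c) F) cs.

Lemma instance_closed c : sentence (subst x (Cst c) F).
Proof.
  intros y. apply not_true_iff_false. intros Hy.
  apply free_subst_cst in Hy as [Hy Hyx]. exact (Hyx (F_free y Hy)).
Qed.

Lemma instances_closed A : In A instances -> sentence A.
Proof. intros HA. apply in_map_iff in HA as [c [<- _]]. apply instance_closed. Qed.

Lemma neg_in_c_var_free y : free y (Neg (in_c cs [x])) = true -> y = x.
Proof.
  intros Hy. cbn [Neg free] in Hy. rewrite orb_false_r in Hy.
  apply free_bigOr in Hy as [A [HA Hy]]. apply in_map_iff in HA as [c [<- _]].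
  simpl in Hy. rewrite orb_false_r in Hy. symmetry. apply Nat.eqb_eq, Hy.
Qed.

Lemma Prov_cases_in_c G A :
  (forall c, In c cs -> Der (Eq (Var x) (Cst c) :: G) A) ->
  Prov (Neg (in_c cs [x]) :: G) A -> Prov G A.
Proof.
  intros Hin Hout. apply P_orE with (in_c cs [x]) (Neg (in_c cs [x])); [| | exact Hout].
  - apply Der_Prov, Der_dec_bigOr. intros B HB. apply in_map_iff in HB as [c [<- _]].
    apply Der_DE.
  - apply Der_Prov, Der_bigOr_elim with (map (fun c => Eq (Var x) (Cst c)) cs); [apply Der_hd |].
    intros B HB. apply in_map_iff in HB as [c [<- Hc]].
    apply Der_weaken with (Eq (Var x) (Cst c) :: G); [| apply Hin, Hc].
    intros C [<- | HC]; [apply in_eq | right; right; exact HC].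
Qed.

Lemma some_constant : exists c0, In c0 cs.
Proof. destruct cs as [|c0 l]; [congruence | exists c0; apply in_eq]. Qed.

Lemma safe_quant_inv q A : prefix A = (q, x) :: prefix F -> matrix A = matrix F ->
  safe A -> ~ In x (map snd (prefix F)) /\ sv q x true (matrix F) = true.
Proof.
  intros Hprefix Hmatrix [[_ [_ [Hnd _]]] Hsv]. rewrite Hprefix in Hnd, Hsv.
  rewrite Hmatrix in Hsv. inversion Hnd. split; [assumption | apply Hsv, in_eq].
Qed.

Lemma Prov_with_SPP_shift G A : (forall C, In C G -> sentence C) -> In (SPP cs F) G ->
  Prov (SPP_shift cs F N :: G) A -> Prov G A.
Proof.
  intros HG HS HA. apply P_impE with (SPP_shift cs F N); [apply P_impI, HA |].
  apply Prov_SPP_shift; [exact HG | exact HS | unfold N; lia].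
Qed.

Lemma Prov_transfer_outside q c G :
  ~ In x (map snd (prefix F)) -> sv q x true (matrix F) = true ->
  (forall C y, In C G -> free y C = true -> y = x) ->
  In (SPP_shift cs F N) G -> In (Neg (in_c cs [x])) G ->
  Prov G (imp_dir (transfer_dir q true) (subst x (Cst c) F) F).
Proof.
  intros Hx Hsv HG HS Hout.
  apply (prenex_transfer cs F N x c cs_covers_F); try assumption.
  - unfold N. lia.
  - apply sub_refl.
  - intros C z HC Hz. rewrite (HG C z HC Hz). exact Hx.
Qed.

Lemma Prov_All_of_instances : safe (All x F) -> Prov [bigAnd instances; SPP cs F] (All x F).
Proof.
  intros Hsafe. destruct (safe_quant_inv QAll (All x F) eq_refl eq_refl Hsafe) as [Hx Hsv].
  destruct some_constant as [c0 Hc0].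
  set (G := [SPP_shift cs F N; bigAnd instances; SPP cs F]).
  assert (HG : forall C, In C G -> sentence C).
  { intros C [<- | [<- | [<- | []]]]; [apply SPP_shift_closed | | apply SPP_shift_closed].
    intros y. apply not_true_iff_false. intros Hy. apply free_bigAnd in Hy as [A [HA Hy]].
    rewrite (instances_closed A HA y) in Hy. discriminate. }
  apply Prov_with_SPP_shift; [intros C HC; apply HG, in_cons, HC | right; left; reflexivity |].
  apply P_allI with x; [apply free_for_self | intros C HC; apply HG, HC | apply free_All_self |].
  rewrite subst_id. apply Prov_cases_in_c.
  - intros c Hc. apply Der_eq_unsubst with x (Cst c);
      [apply free_for_cst | apply Der_eq_sym, Der_hd |].
    apply Der_bigAnd_elim with instances; [apply in_map_iff; exists c; auto |].
    apply Der_ax. right; right; left. reflexivity.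
  - apply P_impE with (subst x (Cst c0) F).
    + apply (Prov_transfer_outside QAll c0); [exact Hx | exact Hsv | |
        right; left; reflexivity | left; reflexivity].
      intros C y [<- | HC] Hy; [apply neg_in_c_var_free, Hy |].
      rewrite (HG C HC y) in Hy. discriminate.
    + apply Der_Prov, Der_bigAnd_elim with instances; [apply in_map_iff; exists c0; auto |].
      apply Der_ax. right; right; left. reflexivity.
Qed.

Lemma Prov_instances_of_Ex : safe (Ex x F) -> Prov [Ex x F; SPP cs F] (bigOr instances).
Proof.
  intros Hsafe. destruct (safe_quant_inv QEx (Ex x F) eq_refl eq_refl Hsafe) as [Hx Hsv].
  destruct some_constant as [c0 Hc0].
  set (G := [SPP_shift cs F N; Ex x F; SPP cs F]).
  assert (HG : forall C, In C G -> sentence C).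
  { intros C [<- | [<- | [<- | []]]]; [apply SPP_shift_closed | | apply SPP_shift_closed].
    intros y. apply not_true_iff_false. intros Hy. apply free_Ex_inv in Hy as Hy'.
    apply F_free in Hy' as ->. rewrite free_Ex_self in Hy. discriminate. }
  apply Prov_with_SPP_shift; [intros C HC; apply HG, in_cons, HC | right; left; reflexivity |].
  apply P_exE with x x F; [apply free_for_self | intros C HC; apply HG, HC | apply free_Ex_self | |
    apply P_ax; right; left; reflexivity |].
  { apply not_true_iff_false. intros Hy. apply free_bigOr in Hy as [A [HA Hy]].
    rewrite (instances_closed A HA x) in Hy. discriminate. }
  rewrite subst_id. apply Prov_cases_in_c.
  - intros c Hc. apply Der_bigOr_intro with (subst x (Cst c) F);
      [apply in_map_iff; exists c; auto |].
    apply Der_eqE with (Var x); [apply free_for_self | apply free_for_cst | apply Der_hd |].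
    rewrite subst_id. apply Der_tl, Der_hd.
  - apply P_impE with (subst x (Cst c0) F).
    + apply Der_Prov, Der_impI, Der_bigOr_intro with (subst x (Cst c0) F);
        [apply in_map_iff; exists c0; auto | apply Der_hd].
    + apply P_impE with F; [| apply P_ax; right; left; reflexivity].
      apply (Prov_transfer_outside QEx c0); [exact Hx | exact Hsv | |
        right; right; left; reflexivity | left; reflexivity].
      intros C y [<- | [<- | HC]] Hy; [apply neg_in_c_var_free, Hy | apply F_free, Hy |].
      rewrite (HG C HC y) in Hy. discriminate.
Qed.

Lemma Prov_All_iff_bigAnd : safe (All x F) ->
  Prov [SPP cs F] (Iff (All x F) (bigAnd instances)).
Proof.
  intros Hsafe. apply P_andI; apply P_impI; [| apply Prov_All_of_instances, Hsafe].
  apply Prov_bigAnd_intro. intros A HA. apply in_map_iff in HA as [c [<- _]].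
  apply P_allE; [apply free_for_cst | apply P_ax, in_eq].
Qed.

Lemma Prov_Ex_iff_bigOr : safe (Ex x F) ->
  Prov [SPP cs F] (Iff (Ex x F) (bigOr instances)).
Proof.
  intros Hsafe. apply P_andI; apply P_impI; [apply Prov_instances_of_Ex, Hsafe |].
  apply Der_Prov, Der_bigOr_elim with instances; [apply Der_hd |].
  intros A HA. apply in_map_iff in HA as [c [<- _]].
  apply Der_exI with (Cst c); [apply free_for_cst | apply Der_hd].
Qed.

End Instances.

Theorem lemma8 (F : form) (x : nat) (cs : list nat) :
  prenex F ->
  (forall y, free y F = true -> y = x) ->
  cs <> [] ->
  (forall c, occ_cst c F = true -> In c cs) ->
  (safe (All x F) ->
     Prov [SPP cs F] (Iff (All x F) (bigAnd (map (fun c => subst x (Cst c) F) cs)))) /\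
  (safe (Ex x F) ->
     Prov [SPP cs F] (Iff (Ex x F) (bigOr (map (fun c => subst x (Cst c) F) cs)))).
Proof.
  intros Hprenex Hfree Hcs Hcovers. split.
  - apply Prov_All_iff_bigAnd; assumption.
  - apply Prov_Ex_iff_bigOr; assumption.
Qed.
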